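(* For a nonzero ring $R$, the following are equivalent: (1) $R$ is local and uniquely weakly $J$-clean; (2) $R$ is uniquely weakly $J$-clean and $0,1$ are the only idempotents of $R$; (3) $R/J(R)\cong\mathbb{Z}_2$ or $R/J(R)\cong\mathbb{Z}_3$.
   Context: All rings are associative with identity; $J(R)$ is the Jacobson radical and $Idem(R)$ the set of idempotents. $R$ is uniquely weakly $J$-clean if for every $x\in R$ there exists a unique $e\in Idem(R)$ with $x-e\in J(R)$ or $x+e\in J(R)$. *)

From HB Require Import structures.
From mathcomp Require Import all_boot all_order all_algebra.
Set Implicit Arguments. Unset Strict Implicit. Unset Printing Implicit Defensive.
Import GRing.Theory.
Local Open Scope ring_scope.

Definition is_unit (R : nzRingType) (u : R) : Prop :=
  exists v : R, v * u = 1 /\ u * v = 1.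

(* Jacobson radical J(R), via the standard element-wise description:
   x \in J(R) iff 1 - r x is a unit for every r in R. *)
Definition jacobson (R : nzRingType) (x : R) : Prop :=
  forall r : R, is_unit (1 - r * x).

Definition idem (R : nzRingType) (e : R) : Prop := e * e = e.

(* Local ring: R/J(R) is a division ring, i.e. every element outside
   J(R) is a unit. *)
Definition local_ring (R : nzRingType) : Prop :=
  forall x : R, ~ jacobson x -> is_unit x.

Definition uniquely_weakly_J_clean (R : nzRingType) : Prop :=
  forall x : R, exists! e : R,
    idem e /\ (jacobson (x - e) \/ jacobson (x + e)).

(* R/J(R) is isomorphic to the ring S (first isomorphism theorem form):
   there is a surjective ring morphism R -> S whose kernel is J(R). *)
Definition quot_jacobson_iso (R : nzRingType) (S : nzRingType) : Prop :=
  exists f : {rmorphism R -> S},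
    (forall s : S, exists r : R, f r = s) /\
    (forall x : R, f x = 0 <-> jacobson x).

From HB Require Import structures.
From mathcomp Require Import all_boot all_order all_algebra.
From Stdlib Require Import Classical ClassicalEpsilon.
Set Implicit Arguments.
Unset Strict Implicit.
Import GRing.Theory.
Local Open Scope ring_scope.

(* Once 0 and 1 are the only idempotents, unique weak J-cleanness says
   exactly that every element is congruent to 0, 1 or -1 modulo J
   (uniqueness is free because 1 is not in J).  Such a ring is local, as
   1 + J and -1 + J consist of units.  The element 2 cannot be congruent
   to 1, so either 2 is in J and R/J = {0, 1} = Z_2, or 2 is congruent to
   -1, 3 is in J and R/J = {0, 1, 2} = Z_3.  Conversely, if R/J is Z_2 or
   Z_3, the three residue classes cover R, and an idempotent e is 0 or 1
   because e or 1 - e is an idempotent of J. *)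

Section JacobsonRadical.

Variable R : nzRingType.
Implicit Types a b c r x y e : R.

Lemma is_unitM a b : is_unit a -> is_unit b -> is_unit (a * b).
Proof.
move=> [u [ua au]] [v [vb bv]]; exists (v * u); split.
  by rewrite mulrA -(mulrA v) ua mulr1.
by rewrite mulrA -(mulrA a) bv mulr1.
Qed.

(* Jacobson's lemma: if u inverts 1 - ab then 1 + bua inverts 1 - ba. *)
Lemma is_unit_subr1_comm a b : is_unit (1 - a * b) -> is_unit (1 - b * a).
Proof.
move=> [u [uab abu]]; exists (1 + b * u * a); split.
  have e : b * (u * (1 - a * b)) * a = b * u * a - b * u * a * b * a.
    by rewrite mulrBr mulr1 mulrBr mulrBl !mulrA.
  by rewrite uab mulr1 in e; rewrite mulrDl mul1r mulrBr mulr1 !mulrA -e subrK.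
have e : b * ((1 - a * b) * u) * a = b * u * a - b * a * b * u * a.
  by rewrite mulrBl mul1r mulrBr mulrBl !mulrA.
by rewrite abu mulr1 in e; rewrite mulrDr mulr1 mulrBl mul1r !mulrA -e subrK.
Qed.

Lemma jacobson0 : jacobson (0 : R).
Proof. by move=> r; exists 1; rewrite mulr0 subr0 mulr1. Qed.

Lemma jacobsonMl r x : jacobson x -> jacobson (r * x).
Proof. by move=> Jx s; rewrite mulrA. Qed.

Lemma jacobsonMr r x : jacobson x -> jacobson (x * r).
Proof.
by move=> Jx s; rewrite mulrA; apply: (@is_unit_subr1_comm r); rewrite mulrA.
Qed.

Lemma jacobsonN x : jacobson x -> jacobson (- x).
Proof. by move=> Jx s; rewrite mulrN -mulNr. Qed.

Lemma jacobsonD x y : jacobson x -> jacobson y -> jacobson (x + y).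
Proof.
move=> Jx Jy r; have [u [u_rx rx_u]] := Jx r.
have -> : 1 - r * (x + y) = (1 - r * x) * (1 - (u * r) * y).
  by rewrite mulrBr mulr1 !mulrA rx_u mul1r mulrDr opprD addrA.
by apply: is_unitM; [exists u | apply: Jy].
Qed.

Lemma jacobsonB x y : jacobson x -> jacobson y -> jacobson (x - y).
Proof. by move=> Jx /jacobsonN; apply: jacobsonD. Qed.

Lemma jacobson_subr_trans a b c :
  jacobson (a - b) -> jacobson (b - c) -> jacobson (a - c).
Proof. by move=> Jab /(jacobsonD Jab); rewrite addrA subrK. Qed.

Lemma jacobson_subr_sym a b : jacobson (a - b) -> jacobson (b - a).
Proof. by move/jacobsonN; rewrite opprB. Qed.

Lemma jacobson_unit_subr x : jacobson x -> is_unit (1 - x).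
Proof. by move=> Jx; have := Jx 1; rewrite mul1r. Qed.

Lemma jacobson1 : ~ jacobson (1 : R).
Proof.
move=> /jacobson_unit_subr [v [+ _]]; rewrite subrr mulr0.
by move/eqP; rewrite eq_sym oner_eq0.
Qed.

Lemma jacobson_idem e : jacobson e -> idem e -> e = 0.
Proof.
move=> /jacobson_unit_subr [v [v1e _]] ee.
have : v * (1 - e) * e = 0 by rewrite -mulrA mulrBl mul1r ee subrr mulr0.
by rewrite v1e mul1r.
Qed.

Lemma unit_of_jacobson_subr1 x : jacobson (x - 1) -> is_unit x.
Proof. by move/jacobsonN/jacobson_unit_subr; rewrite opprK addrC subrK. Qed.

Lemma unit_of_jacobson_addr1 x : jacobson (x + 1) -> is_unit x.
Proof.
move/jacobson_unit_subr; rewrite addrC opprD subrK => -[v [v_x x_v]].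
by exists (- v); split; [rewrite mulNr -mulrN | rewrite mulrN -mulNr].
Qed.

Lemma jacobson_natr_modn p m : jacobson (p%:R : R) ->
  jacobson ((m %% p)%:R - m%:R : R).
Proof.
move=> /(jacobsonMl (m %/ p)%:R) /jacobsonN.
by rewrite {3}(divn_eq m p) natrD natrM opprD addrC subrK.
Qed.

Lemma jacobson_natr_inj p i j :
    (forall d, (0 < d < p)%N -> ~ jacobson (d%:R : R)) ->
  (i < p)%N -> (j < p)%N -> jacobson (i%:R - j%:R : R) -> i = j.
Proof.
move=> Jfree; wlog le_ij : i j / (i <= j)%N.
  move=> hwlog lt_ip lt_jp Jij; case: (leqP i j) => [le_ij | /ltnW le_ji].
    exact: hwlog.
  by apply/esym/hwlog => //; apply: jacobson_subr_sym.
move=> lt_ip lt_jp Jij; have [// | ne_ij] := eqVneq i j; exfalso.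
have lt_ij : (i < j)%N by rewrite ltn_neqAle ne_ij le_ij.
apply: (Jfree (j - i)%N).
  by rewrite subn_gt0 lt_ij /=; apply: leq_ltn_trans (leq_subr i j) lt_jp.
by rewrite natrB //; apply: jacobson_subr_sym.
Qed.

End JacobsonRadical.

Definition idempotents_trivial (R : nzRingType) : Prop :=
  forall e : R, idem e -> e = 0 \/ e = 1.

Definition jacobson_trichotomy (R : nzRingType) : Prop :=
  forall x : R, jacobson x \/ jacobson (x - 1) \/ jacobson (x + 1).

Section TrivialIdempotents.

Variable R : nzRingType.

Lemma local_idempotents_trivial : local_ring R -> idempotents_trivial R.
Proof.
move=> Rloc e ee; case: (classic (jacobson e)) => [Je | NJe].
  by left; apply: jacobson_idem.
have [v [ve _]] := Rloc e NJe; right.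
by have := congr1 (GRing.mul v) ee; rewrite mulrA ve mul1r.
Qed.

Lemma trichotomy_local : jacobson_trichotomy R -> local_ring R.
Proof.
move=> Rtri x NJx; case: (Rtri x) => [// | [] ].
  exact: unit_of_jacobson_subr1.
exact: unit_of_jacobson_addr1.
Qed.

Lemma uniquely_weakly_J_cleanP : idempotents_trivial R ->
  uniquely_weakly_J_clean R <-> jacobson_trichotomy R.
Proof.
move=> Ridem; split=> [Rclean x | Rtri x].
  have [e [[ee Jxe] _]] := Rclean x.
  case: (Ridem e ee) Jxe => -> Jxe; last by right.
  by left; case: Jxe; rewrite ?subr0 ?addr0.
have idem0 : idem (0 : R) by rewrite /idem mulr0.
have idem1 : idem (1 : R) by rewrite /idem mulr1.
have J01 : jacobson x -> ~ (jacobson (x - 1) \/ jacobson (x + 1)).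
  move=> Jx [] Jx1; apply: (@jacobson1 R).
    by move: (jacobsonB Jx Jx1); rewrite opprB addrC subrK.
  by move: (jacobsonB Jx1 Jx); rewrite addrC addKr.
have clean_uniq e e' : idem e -> idem e' ->
    jacobson (x - e) \/ jacobson (x + e) ->
    jacobson (x - e') \/ jacobson (x + e') -> e = e'.
  move=> /Ridem [] -> /Ridem [] -> //; rewrite ?subr0 ?addr0.
    by move=> [] Jx Jx1; case: (J01 Jx).
  by move=> Jx1 [] Jx; case: (J01 Jx).
case: (Rtri x) => [Jx | Jx1].
  exists 0; split=> [|e' [e'e' Je']]; first by split=> //; left; rewrite subr0.
  by apply: clean_uniq idem0 e'e' _ Je'; left; rewrite subr0.
exists 1; split=> [|e' [e'e' Je']]; first by split.
exact: clean_uniq idem1 e'e' Jx1 Je'.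
Qed.

Lemma quot_jacobson_idempotents_trivial (S : nzRingType) :
  idempotents_trivial S -> quot_jacobson_iso R S -> idempotents_trivial R.
Proof.
move=> Sidem [f [_ kerf]] e ee.
case: (Sidem (f e)); first by rewrite /idem -rmorphM ee.
  by move=> fe0; left; apply: jacobson_idem => //; apply/kerf.
move=> fe1; right; apply/eqP; rewrite eq_sym -subr_eq0; apply/eqP/jacobson_idem.
  by apply/kerf; rewrite rmorphB rmorph1 fe1 subrr.
by rewrite /idem mulrBl mul1r mulrBr mulr1 ee subrr subr0.
Qed.

Lemma quot_jacobson_trichotomy (S : nzRingType) :
    (forall s : S, s = 0 \/ s = 1 \/ s = -1) ->
  quot_jacobson_iso R S -> jacobson_trichotomy R.
Proof.
move=> Sel [f [_ kerf]] x.
case: (Sel (f x)) => [fx | [fx | fx]]; [left | right; left | right; right]; apply/kerf.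
- exact: fx.
- by rewrite rmorphB rmorph1 fx subrr.
- by rewrite rmorphD rmorph1 fx addNr.
Qed.

Lemma quot_jacobson_clean_idempotents_trivial (S : nzRingType) :
    idempotents_trivial S -> (forall s : S, s = 0 \/ s = 1 \/ s = -1) ->
  quot_jacobson_iso R S -> uniquely_weakly_J_clean R /\ idempotents_trivial R.
Proof.
move=> Sidem Sel RS; have Ridem := quot_jacobson_idempotents_trivial Sidem RS.
by split=> //; apply/(uniquely_weakly_J_cleanP Ridem)/(quot_jacobson_trichotomy Sel).
Qed.

Lemma trichotomy_residue n : jacobson_trichotomy R -> jacobson (n.+2%:R : R) ->
  forall x : R, exists k : 'I_n.+2, jacobson (x - (val k)%:R).
Proof.
move=> Rtri Jp x; case: (Rtri x) => [Jx | [Jx1 | Jx1]].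
- by exists ord0; rewrite subr0.
- by exists (Ordinal (isT : 1 < n.+2)%N).
- exists ord_max; move: (jacobsonB Jx1 Jp).
  by rewrite -natr1 opprD addrACA subrr addr0.
Qed.

End TrivialIdempotents.

Section QuotientByJacobsonZp.

Variables (R : nzRingType) (n : nat).
Local Notation p := n.+2.

Hypothesis jacobson_p : jacobson (p%:R : R).
Hypothesis jacobson_natr_free : forall d, (0 < d < p)%N -> ~ jacobson (d%:R : R).
Hypothesis residue_exists : forall x : R, exists k : 'Z_p, jacobson (x - (val k)%:R).

Definition residue (x : R) : 'Z_p :=
  proj1_sig (constructive_indefinite_description _ (residue_exists x)).

Lemma residueP x : jacobson (x - (val (residue x))%:R).
Proof. by rewrite /residue; case: constructive_indefinite_description. Qed.

Lemma residue_eq x (k : 'Z_p) : jacobson (x - (val k)%:R) -> residue x = k.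
Proof.
move=> Jxk; apply: val_inj.
apply: (jacobson_natr_inj jacobson_natr_free (ltn_ord _) (ltn_ord _)).
exact: jacobson_subr_trans (jacobson_subr_sym (residueP x)) Jxk.
Qed.

Lemma residue_is_nmod_morphism : nmod_morphism residue.
Proof.
split; first by apply: residue_eq; rewrite subrr; apply: jacobson0.
move=> x y; apply: residue_eq.
have Jsum : jacobson ((x + y) - ((val (residue x))%:R + (val (residue y))%:R)).
  by move: (jacobsonD (residueP x) (residueP y)); rewrite opprD addrACA.
apply: jacobson_subr_trans Jsum _; rewrite -natrD.
exact/jacobson_subr_sym/jacobson_natr_modn.
Qed.

Lemma residue_is_monoid_morphism : monoid_morphism residue.
Proof.
split; first by apply: residue_eq; rewrite subrr; apply: jacobson0.
move=> x y; apply: residue_eq.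
set a : R := (val (residue x))%:R; set b : R := (val (residue y))%:R.
have Jxy : jacobson (x * y - a * y) by rewrite -mulrBl; apply/jacobsonMr/residueP.
have Jay : jacobson (a * y - a * b) by rewrite -mulrBr; apply/jacobsonMl/residueP.
apply: jacobson_subr_trans (jacobson_subr_trans Jxy Jay) _; rewrite -natrM.
exact/jacobson_subr_sym/jacobson_natr_modn.
Qed.

HB.instance Definition _ :=
  GRing.isNmodMorphism.Build R 'Z_p residue residue_is_nmod_morphism.
HB.instance Definition _ :=
  GRing.isMonoidMorphism.Build R 'Z_p residue residue_is_monoid_morphism.

Lemma quot_jacobson_iso_Zp : quot_jacobson_iso R 'Z_p.
Proof.
exists residue; split=> [k | x].
  by exists (val k)%:R; apply: residue_eq; rewrite subrr; apply: jacobson0.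
split=> [rx0 | Jx]; last by apply: residue_eq; rewrite subr0.
by have := residueP x; rewrite rx0 subr0.
Qed.

End QuotientByJacobsonZp.

Lemma trichotomy_quot_Z2_or_Z3 (R : nzRingType) : jacobson_trichotomy R ->
  quot_jacobson_iso R 'Z_2 \/ quot_jacobson_iso R 'Z_3.
Proof.
move=> Rtri; case: (classic (jacobson (2%:R : R))) => [J2 | NJ2].
  left; apply: (@quot_jacobson_iso_Zp R 0) => //; last exact: trichotomy_residue.
  by case=> [|[|]] //= _; rewrite mulr1n; apply: jacobson1.
have J3 : jacobson (3%:R : R).
  case: (Rtri 2%:R) => [// | [J21 | ]]; last by rewrite natr1.
  by exfalso; apply: (@jacobson1 R); move: J21; rewrite (natrD _ 1 1) addrK.
right; apply: (@quot_jacobson_iso_Zp R 1) => //; last exact: trichotomy_residue.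
by case=> [|[|[|]]] //= _; rewrite mulr1n; apply: jacobson1.
Qed.

Lemma Z2_idempotents_trivial : idempotents_trivial 'Z_2.
Proof. by case=> -[|[|//]] ? _; [left | right]; apply/val_inj. Qed.

Lemma Z3_idempotents_trivial : idempotents_trivial 'Z_3.
Proof. by case=> -[|[|[|//]]] ? /(congr1 val) //= _; [left | right]; apply/val_inj. Qed.

Lemma Z2_elements (s : 'Z_2) : s = 0 \/ s = 1 \/ s = -1.
Proof. by case: s => -[|[|//]] ?; [left | right; left]; apply/val_inj. Qed.

Lemma Z3_elements (s : 'Z_3) : s = 0 \/ s = 1 \/ s = -1.
Proof.
by case: s => -[|[|[|//]]] ?; [left | right; left | right; right]; apply/val_inj.
Qed.

Theorem mainTheorem13 (R : nzRingType) :
  (local_ring R /\ uniquely_weakly_J_clean R <->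
   uniquely_weakly_J_clean R /\ (forall e : R, idem e -> e = 0 \/ e = 1)) /\
  (uniquely_weakly_J_clean R /\ (forall e : R, idem e -> e = 0 \/ e = 1) <->
   quot_jacobson_iso R 'Z_2 \/ quot_jacobson_iso R 'Z_3).
Proof.
split; split.
- by move=> [Rloc Rclean]; split=> //; apply: local_idempotents_trivial.
- move=> [Rclean Ridem]; split=> //; apply: trichotomy_local.
  exact/(uniquely_weakly_J_cleanP Ridem).
- move=> [Rclean Ridem]; apply: trichotomy_quot_Z2_or_Z3.
  exact/(uniquely_weakly_J_cleanP Ridem).
- by case; apply: quot_jacobson_clean_idempotents_trivial;
    [exact: Z2_idempotents_trivial | exact: Z2_elements
    | exact: Z3_idempotents_trivial | exact: Z3_elements].
Qed.
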